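(* Let $(T_+,T_-)$ be a tree diagram representing an element of the $3$-colorable subgroup $\mathcal{F}$. Then for every leaf, the path from that leaf to the root of $T_+$ and the path from that leaf to the root of $T_-$ have lengths of the same parity. Equivalently, $|\alpha_k^+|\equiv|\alpha_k^-|\pmod 2$ for every $k$, where $\alpha_k^\pm$ is the binary word of the $k$-th leaf of $T_\pm$.
   Context: Thompson's group $F$ is the group of piecewise linear homeomorphisms of $[0,1]$ that are differentiable except at finitely many dyadic rationals with slopes in $2^{\mathbb{Z}}$. A tree diagram $(T_+,T_-)$ is a pair of finite rooted planar binary trees with the same number $n$ of leaves. Vertices are encoded by binary path words ($0$ = left, $1$ = right). The diagram represents the element mapping $[.\alpha_k^+,.\alpha_k^++2^{-|\alpha_k^+|}]$ affinely onto $[.\alpha_k^-,.\alpha_k^-+2^{-|\alpha_k^-|}]$. Each element has a unique reduced diagram. The $3$-colorable subgroup $\mathcal{F}$ consists of the elements whose reduced diagram, drawn with $T_+$ having leaves at $(k,0)$ and root on $y=1$ and $T_-$ mirrored below with root on $y=-1$, divides the strip $\{-1\le y\le1\}$ into regions colorable with three colors so that regions sharing an edge differ. *)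

From mathcomp Require Import all_boot all_order all_algebra.
Set Implicit Arguments. Unset Strict Implicit. Unset Printing Implicit Defensive.
Import Order.TTheory GRing.Theory Num.Theory.

Inductive btree : Type := Leaf | Node of btree & btree.

(* Binary path words of the leaves, in left-to-right order
   (false = 0 = left, true = 1 = right). *)
Fixpoint leaves (t : btree) : seq (seq bool) :=
  match t with
  | Leaf => [:: [::]]
  | Node l r => map (cons false) (leaves l) ++ map (cons true) (leaves r)
  end.

Definition nleaves (t : btree) : nat := size (leaves t).

Local Open Scope ring_scope.

Fixpoint dval (w : seq bool) : rat :=
  match w with
  | [::] => 0
  | b :: w' => ((b : nat)%:R + dval w') / 2%:R
  end.

Definition dlen (w : seq bool) : rat := (2%:R)^-1 ^+ size w.

Fixpoint pl_eval (ps : seq (seq bool * seq bool)) (x : rat) : rat :=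
  match ps with
  | [::] => x
  | (a, b) :: ps' =>
      if (dval a <= x) && (x <= dval a + dlen a)
      then dval b + (x - dval a) * (dlen b / dlen a)
      else pl_eval ps' x
  end.

(* The element of F represented by the tree diagram (tp, tm), as a map on [0,1]
   (evaluated on rationals, which determines a continuous map). *)
Definition diag_fun (tp tm : btree) (x : rat) : rat :=
  pl_eval (zip (leaves tp) (leaves tm)) x.

Definition same_element (tp tm sp sm : btree) : Prop :=
  forall x : rat, 0 <= x <= 1 -> diag_fun tp tm x = diag_fun sp sm x.

Local Close Scope ring_scope.

Definition reduced (tp tm : btree) : Prop :=
  forall k, k.+1 < nleaves tp ->
    ~ ((exists u, nth [::] (leaves tp) k = rcons u false /\
                  nth [::] (leaves tp) k.+1 = rcons u true) /\
       (exists v, nth [::] (leaves tm) k = rcons v false /\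
                  nth [::] (leaves tm) k.+1 = rcons v true)).

(* Regions of the strip picture: region i (0 <= i <= n) is the region lying
   between leaf i-1 and leaf i (region 0: left of leaf 0; region n: right of
   leaf n-1).  The edge entering a (non-root) vertex whose subtree has leaves
   a..b separates regions a and b+1.  [edges_below t off] lists these
   adjacencies for the edge above t and all edges inside t, where the leaves
   of t are numbered from off. *)
Fixpoint edges_below (t : btree) (off : nat) : seq (nat * nat) :=
  match t with
  | Leaf => [:: (off, off.+1)]
  | Node l r => (off, off + nleaves t)
                  :: edges_below l off ++ edges_below r (off + nleaves l)
  end.

(* Convention: the
   root is attached to the boundary line, so the two outer regions (0 and n)
   lie on the two sides of the root and are adjacent; this is
   the edge (0, n) produced by [edges_below t 0]. *)
Definition tree_adj (t : btree) : seq (nat * nat) := edges_below t 0.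

Definition three_colorable (tp tm : btree) : Prop :=
  exists c : nat -> 'I_3,
    forall e, e \in tree_adj tp ++ tree_adj tm -> c e.1 != c e.2.

Definition in_3col_subgroup (tp tm : btree) : Prop :=
  exists sp sm : btree,
    [/\ nleaves sp = nleaves sm, reduced sp sm,
        same_element tp tm sp sm & three_colorable sp sm].

From mathcomp Require Import all_boot all_order all_algebra.
From mathcomp Require Import ring lra.
Import Order.TTheory GRing.Theory Num.Theory.

Set Implicit Arguments.
Unset Strict Implicit.
Unset Printing Implicit Defensive.

(** In a proper 3-colouring of the regions cut out by one tree, the colour
  difference across leaf [i] is [(-1)^d * D], where [d] is the depth of the
  leaf and [D] the colour difference between the two outer regions.  Both trees
  of a 3-colourable diagram share the regions, hence [D]; as [D <> -D] in
  [Z/3], leaves [i] of the two trees have depths of equal parity.  The parity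
  of [|a| - |b|] is moreover an invariant of the element: on a dyadic interval
  contained in leaf [a -> b] of one diagram and leaf [a' -> b'] of another,
  the slope is both [2^(|a|-|b|)] and [2^(|a'|-|b'|)]. *)

Lemma nleaves_Node l r : nleaves (Node l r) = nleaves l + nleaves r.
Proof. by rewrite /nleaves /= size_cat !size_map. Qed.

Lemma nleaves_gt0 t : 0 < nleaves t.
Proof. by elim: t => //= l IHl r _; rewrite nleaves_Node ltn_addr. Qed.

Lemma nth_leaves_Node l r i : i < nleaves (Node l r) ->
  nth [::] (leaves (Node l r)) i =
  if i < nleaves l then false :: nth [::] (leaves l) i
  else true :: nth [::] (leaves r) (i - nleaves l).
Proof.
rewrite nleaves_Node /= nth_cat size_map => lt_i_n.
case: ifP => [lt_i_l | /negbT]; first by rewrite (nth_map [::]).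
by rewrite -leqNgt => le_l_i; rewrite (nth_map [::]) // ltn_subLR.
Qed.

Lemma leaf_prefix_cover t w : exists2 j, j < nleaves t &
  prefix (nth [::] (leaves t) j) w || prefix w (nth [::] (leaves t) j).
Proof.
elim: t w => [|l IHl r IHr] w; first by exists 0; rewrite ?prefix0s.
case: w => [|[] w]; first by exists 0; rewrite ?nleaves_gt0 ?prefix0s ?orbT.
- have [j lt_j_r cmp] := IHr w.
  have lt_lj_n : nleaves l + j < nleaves (Node l r) by rewrite nleaves_Node ltn_add2l.
  exists (nleaves l + j) => //.
  by rewrite nth_leaves_Node // ltnNge leq_addr /= addKn.
- have [j lt_j_l cmp] := IHl w.
  have lt_j_n : j < nleaves (Node l r) by rewrite nleaves_Node ltn_addr.
  by exists j; rewrite // nth_leaves_Node // lt_j_l.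
Qed.

Fixpoint left_of (u v : seq bool) : bool :=
  match u, v with
  | b :: u', c :: v' => if b == c then left_of u' v' else ~~ b && c
  | _, _ => false
  end.

Lemma leaves_pairwise_left_of t : pairwise left_of (leaves t).
Proof.
elim: t => //= l IHl r IHr.
rewrite pairwise_cat !pairwise_map allrel_mapl allrel_mapr.
apply/and3P; split; first exact/allrelP.
- exact: sub_pairwise IHl.
- exact: sub_pairwise IHr.
Qed.

Section DyadicIntervals.
Local Open Scope ring_scope.

Definition in_dyadic (w : seq bool) (x : rat) :=
  (dval w <= x) && (x <= dval w + dlen w).

Definition in_dyadic_interior (w : seq bool) (x : rat) :=
  (dval w < x) && (x < dval w + dlen w).

Definition affine_piece (a b : seq bool) (x : rat) :=
  dval b + (x - dval a) * (dlen b / dlen a).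

Lemma dlen_cons b w : dlen (b :: w) = 2^-1 * dlen w.
Proof. by rewrite /dlen /= exprS. Qed.

Lemma dlen_cat u v : dlen (u ++ v) = dlen u * dlen v.
Proof. by rewrite /dlen size_cat exprD. Qed.

Lemma dval_cat u v : dval (u ++ v) = dval u + dlen u * dval v.
Proof.
elim: u => [|b u IH] /=; first by rewrite /dlen expr0 mul1r add0r.
by rewrite IH dlen_cons; field.
Qed.

Lemma dlen_gt0 w : 0 < dlen w.
Proof. by rewrite /dlen exprn_gt0 // invr_gt0. Qed.

Lemma bitr_le1 (b : bool) : b%:R <= 1 :> rat.
Proof. by rewrite lern1 leq_b1. Qed.

Lemma dyadic_sub_unit w : 0 <= dval w /\ dval w + dlen w <= 1.
Proof.
elim: w => [|b w [ge0 le1]] /=; first by rewrite /dlen expr0 add0r.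
have := dlen_gt0 w; have := ler0n rat b; have := bitr_le1 b.
rewrite dlen_cons; split; lra.
Qed.

Lemma in_dyadic_interior_unit w x : in_dyadic_interior w x -> 0 <= x <= 1.
Proof. by have [] := dyadic_sub_unit w; move=> ? ? /andP[? ?]; apply/andP; lra. Qed.

Lemma in_dyadic_interior_catl u v x :
  in_dyadic_interior (u ++ v) x -> in_dyadic_interior u x.
Proof.
rewrite /in_dyadic_interior dval_cat dlen_cat.
have [v_ge0 v_le1] := dyadic_sub_unit v; have u_gt0 := dlen_gt0 u.
have := mulr_ge0 (ltW u_gt0) v_ge0.
have : dlen u * (dval v + dlen v) <= dlen u by rewrite ler_piMr // ltW.
by rewrite mulrDr => ? ? /andP[? ?]; apply/andP; lra.
Qed.

Lemma left_of_le u v : left_of u v -> dval u + dlen u <= dval v.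
Proof.
elim: u v => [|b u IH] [|c v] //=.
have [? ?] := dyadic_sub_unit u; have [? ?] := dyadic_sub_unit v.
have := ler0n rat b; have := bitr_le1 b.
rewrite dlen_cons; case: eqP => [<- ? ? /IH|]; first lra.
by case: b; case: c => //= _ _ _ _; lra.
Qed.

Lemma pl_eval_first_hit ps k x : (k < size ps)%N ->
  (forall i, (i < k)%N -> ~~ in_dyadic (nth ([::], [::]) ps i).1 x) ->
  in_dyadic (nth ([::], [::]) ps k).1 x ->
  pl_eval ps x = affine_piece (nth ([::], [::]) ps k).1 (nth ([::], [::]) ps k).2 x.
Proof.
elim: ps k => [|[a b] ps IH] [|k] //= lt_k_ps miss; first by rewrite /in_dyadic => ->.
have := miss 0%N isT; rewrite /in_dyadic /= => /negbTE ->.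
apply: IH => // i lt_i_k.
exact: (miss i.+1).
Qed.

Lemma diag_fun_leaf tp tm k x : nleaves tp = nleaves tm -> (k < nleaves tp)%N ->
  in_dyadic_interior (nth [::] (leaves tp) k) x ->
  diag_fun tp tm x = affine_piece (nth [::] (leaves tp) k) (nth [::] (leaves tm) k) x.
Proof.
move=> eq_n lt_k_n /andP[x_gt x_lt]; rewrite /diag_fun.
have eq_size : size (leaves tp) = size (leaves tm) := eq_n.
rewrite (@pl_eval_first_hit _ k) ?nth_zip // ?size_zip -?eq_size ?minnn //.
- move=> i lt_i_k; rewrite nth_zip //= /in_dyadic negb_and -ltNge -ltNge.
  have /(pairwiseP [::]) sorted_leaves := leaves_pairwise_left_of tp.
  have := left_of_le (sorted_leaves i k (ltn_trans lt_i_k lt_k_n) lt_k_n lt_i_k).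
  by move=> ?; apply/orP; right; lra.
- by rewrite /in_dyadic !ltW.
Qed.

Lemma affine_slope_unique (F : fieldType) (a b q a' b' q' x y : F) : x != y ->
  b + (x - a) * q = b' + (x - a') * q' ->
  b + (y - a) * q = b' + (y - a') * q' -> q = q'.
Proof.
move=> neq_xy eq_x eq_y; apply/eqP; rewrite -subr_eq0.
have : (x - y) * (q - q') = 0.
  have -> : (x - y) * (q - q') = (b + (x - a) * q - (b' + (x - a') * q'))
      - (b + (y - a) * q - (b' + (y - a') * q')) by ring.
  by rewrite eq_x eq_y !subrr.
by move/eqP; rewrite mulf_eq0 (subr_eq0 x) (negbTE neq_xy).
Qed.

Lemma dlen_ratio_size a b a' b' : dlen b / dlen a = dlen b' / dlen a' ->
  (size a + size b' = size a' + size b)%N.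
Proof.
rewrite /dlen !exprVn -!natrX !invrK ![_^-1 * _]mulrC => /eqP.
rewrite eqr_div ?pnatr_eq0 ?expn_eq0 // -!natrM eqr_nat -!expnD eqn_exp2l //.
by move/eqP.
Qed.

Lemma same_element_leaf_sizes tp tm sp sm k j w :
  nleaves tp = nleaves tm -> nleaves sp = nleaves sm ->
  same_element tp tm sp sm -> (k < nleaves tp)%N -> (j < nleaves sp)%N ->
  prefix (nth [::] (leaves tp) k) w -> prefix (nth [::] (leaves sp) j) w ->
  (size (nth [::] (leaves tp) k) + size (nth [::] (leaves sm) j) =
   size (nth [::] (leaves sp) j) + size (nth [::] (leaves tm) k))%N.
Proof.
move=> eq_t eq_s same lt_k lt_j /prefixP[r ->] /prefixP[r' eq_w].
apply: dlen_ratio_size.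
set W := _ ++ r in eq_w.
have agree x : in_dyadic_interior W x ->
    affine_piece (nth [::] (leaves tp) k) (nth [::] (leaves tm) k) x =
    affine_piece (nth [::] (leaves sp) j) (nth [::] (leaves sm) j) x.
  move=> xW; have x_tp := in_dyadic_interior_catl xW.
  have x_sp : in_dyadic_interior (nth [::] (leaves sp) j) x.
    by apply: (in_dyadic_interior_catl (v := r')); rewrite -eq_w.
  by rewrite -!diag_fun_leaf //; apply/same/(in_dyadic_interior_unit xW).
have W_gt0 := dlen_gt0 W.
apply: (affine_slope_unique (x := dval W + dlen W / 4%:R) (y := dval W + dlen W / 2%:R)).
- by rewrite lt_eqF //; lra.
- by apply: agree; apply/andP; lra.
- by apply: agree; apply/andP; lra.
Qed.

End DyadicIntervals.

Section Coloring.
Local Open Scope ring_scope.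

Lemma Zp3_distinct_progression (x y z : 'I_3) :
  x != y -> y != z -> x != z -> y - x = x - z /\ z - y = x - z.
Proof.
case: x => [[|[|[|?]]] ?] //; case: y => [[|[|[|?]]] ?] //;
  case: z => [[|[|[|?]]] ?] // *; split; exact/val_inj.
Qed.

Lemma Zp3_oppr_neq (x : 'I_3) : x != 0 -> - x != x.
Proof. by case: x => [[|[|[|?]]] ?]. Qed.

Lemma Zp3_sign_odd (D : 'I_3) m n : D != 0 ->
  (-1) ^+ m * D = (-1) ^+ n * D -> odd m = odd n.
Proof.
move=> /Zp3_oppr_neq neq_D; rewrite -(signr_odd _ m) -(signr_odd _ n).
case: (odd m); case: (odd n); rewrite //= expr1 expr0 mulN1r mul1r => eq_D;
  [by rewrite eq_D eqxx in neq_D | by rewrite -eq_D eqxx in neq_D].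
Qed.

Definition proper_coloring (T : eqType) (c : nat -> T) (es : seq (nat * nat)) :=
  all (fun e => c e.1 != c e.2) es.

Lemma edges_below_root t off : (off, off + nleaves t)%N \in edges_below t off.
Proof. by case: t => [|l r]; rewrite /nleaves /= inE ?addn1 eqxx. Qed.

Lemma proper_coloring_leaf_step (c : nat -> 'I_3) t off :
  proper_coloring c (edges_below t off) -> forall i, (i < nleaves t)%N ->
  c (off + i).+1 - c (off + i)%N =
  (-1) ^+ size (nth [::] (leaves t) i) * (c (off + nleaves t)%N - c off).
Proof.
elim: t off => [|l IHl r IHr] off.
  by move=> _ [|//] _; rewrite /nleaves /= addn0 addn1 expr0 mul1r.
rewrite /proper_coloring /= all_cat => /and3P[root_ok ok_l ok_r] i lt_i_n.
have neq_l : c off != c (off + nleaves l)%N := allP ok_l _ (edges_below_root l off).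
have neq_r : c (off + nleaves l)%N != c (off + nleaves l + nleaves r)%N :=
  allP ok_r _ (edges_below_root r (off + nleaves l)).
rewrite nleaves_Node addnA in root_ok *.
have [step_l step_r] := Zp3_distinct_progression neq_l neq_r root_ok.
rewrite nth_leaves_Node //; case: ifP => [lt_i_l | /negbT]; rewrite /= exprS.
  by rewrite IHl // step_l mulN1r mulNr -mulrN opprB.
rewrite -leqNgt => le_l_i.
have -> : (off + i = off + nleaves l + (i - nleaves l))%N by rewrite -addnA subnKC.
rewrite IHr ?step_r ?mulN1r ?mulNr -?mulrN ?opprB //.
by rewrite ltn_subLR // -nleaves_Node.
Qed.

Lemma three_colorable_leaf_parity sp sm : nleaves sp = nleaves sm ->
  three_colorable sp sm -> forall j, (j < nleaves sp)%N ->
  odd (size (nth [::] (leaves sp) j)) = odd (size (nth [::] (leaves sm) j)).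
Proof.
move=> eq_n [c proper] j lt_j.
have /andP[ok_p ok_m] : proper_coloring c (tree_adj sp) && proper_coloring c (tree_adj sm).
  by rewrite -all_cat; apply/allP => e /proper.
have D_neq0 : c (0 + nleaves sp)%N - c 0%N != 0.
  by rewrite subr_eq0 eq_sym (allP ok_p _ (edges_below_root sp 0)).
apply: (Zp3_sign_odd D_neq0).
rewrite -(proper_coloring_leaf_step ok_p) // [in RHS]eq_n.
by rewrite -(proper_coloring_leaf_step ok_m) // -eq_n.
Qed.

End Coloring.

Theorem lemma2p6 (tp tm : btree) :
  nleaves tp = nleaves tm ->
  in_3col_subgroup tp tm ->
  forall k, k < nleaves tp ->
    odd (size (nth [::] (leaves tp) k)) = odd (size (nth [::] (leaves tm) k)).
Proof.
move=> eq_t [sp [sm [eq_s _ same colorable]]] k lt_k.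
have [j lt_j cmp] := leaf_prefix_cover sp (nth [::] (leaves tp) k).
have sizes : (size (nth [::] (leaves tp) k) + size (nth [::] (leaves sm) j) =
              size (nth [::] (leaves sp) j) + size (nth [::] (leaves tm) k))%N.
  have same_sizes := same_element_leaf_sizes eq_t eq_s same lt_k lt_j.
  case/orP: cmp => pre; first exact: same_sizes (prefix_refl _) pre.
  exact: same_sizes pre (prefix_refl _).
move/(congr1 odd): sizes; rewrite !oddD (three_colorable_leaf_parity eq_s colorable lt_j).
by case: (odd _); case: (odd _); case: (odd _).
Qed.
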